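(* Let $\mathbf A$ be the adjacency matrix of a directed stochastic block model with edge-probability matrix $\mathbf P$, and for distinct $i_1,i_2\in[n]$ let $$M(i_1,i_2)=\frac1{n-2}\left|\sum_{j\in[n]\setminus\{i_1,i_2\}}(A_{i_1j}-P_{i_1j})(A_{i_2j}-P_{i_2j})\right|.$$ Then for any $\epsilon_m>0$, $$\mathbb P\left(\max_{i_1\ne i_2}M(i_1,i_2)<\epsilon_m\right)\ge1-n(n-1)\exp\left(-\frac{\frac12(n-2)\epsilon_m^2}{1+\frac13\epsilon_m}\right),$$ and, for $n\ge4$, the right-hand side is at least $1-n(n-1)\exp\left(-\frac{\frac14n\epsilon_m^2}{1+\epsilon_m}\right)$.
   Context: Model: nodes $[n]$, $K_n$ communities, community-probability vector $\boldsymbol\rho$, block matrix $\mathbf B\in[0,1]^{K_n\times K_n}$, sparsity factor $\gamma_n\in(0,1]$. Labels $Z_1,\dots,Z_n$ i.i.d. Categorical$(\boldsymbol\rho)$, $\pi(i)=Z_i$. Conditionally on the labels, $A_{ij}$ ($i\ne j$) are independent Bernoulli$(\gamma_nB_{\pi(i)\pi(j)})$, $A_{ii}=0$; $\mathbf A$ need not be symmetric. $P_{ij}=\gamma_nB_{\pi(i)\pi(j)}$ for all $i,j$. *)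

From HB Require Import structures.
From mathcomp Require Import all_boot all_order all_algebra.
From mathcomp Require Import all_classical all_reals all_analysis.
Set Implicit Arguments. Unset Strict Implicit. Unset Printing Implicit Defensive.
Import Order.TTheory GRing.Theory Num.Theory.
Local Open Scope ring_scope.

(* An outcome of the directed SBM: community labels z (pi(i) = z i)
   and the adjacency matrix A, encoded as a boolean function on pairs. *)
Definition sbm_outcome (n K : nat) : finType :=
  ({ffun 'I_n -> 'I_K} * {ffun 'I_n * 'I_n -> bool})%type.

Definition Pmat {R : realType} (n K : nat) (B : 'I_K -> 'I_K -> R) (gamma : R)
  (z : {ffun 'I_n -> 'I_K}) (i j : 'I_n) : R := gamma * B (z i) (z j).

Definition Aent {R : realType} (n : nat) (A : {ffun 'I_n * 'I_n -> bool})
  (i j : 'I_n) : R := (A (i, j))%:R.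

(* Joint probability mass function of (labels, adjacency):
   labels i.i.d. Categorical(rho); conditionally on labels, off-diagonal
   entries independent Bernoulli(P_ij); diagonal entries are 0. *)
Definition sbm_pmf {R : realType} (n K : nat) (rho : 'I_K -> R)
  (B : 'I_K -> 'I_K -> R) (gamma : R) (w : sbm_outcome n K) : R :=
  let z := w.1 in let A := w.2 in
  (\prod_(i : 'I_n) rho (z i)) *
  \prod_(ij : 'I_n * 'I_n)
     (if ij.1 == ij.2 then (~~ A ij)%:R
      else if A ij then Pmat B gamma z ij.1 ij.2
      else 1 - Pmat B gamma z ij.1 ij.2).

Definition sbm_prob {R : realType} (n K : nat) (rho : 'I_K -> R)
  (B : 'I_K -> 'I_K -> R) (gamma : R) (E : pred (sbm_outcome n K)) : R :=
  \sum_(w | E w) sbm_pmf rho B gamma w.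

Definition Mstat {R : realType} (n K : nat) (B : 'I_K -> 'I_K -> R) (gamma : R)
  (w : sbm_outcome n K) (i1 i2 : 'I_n) : R :=
  (n - 2)%:R^-1 *
  `| \sum_(j : 'I_n | (j != i1) && (j != i2))
       (Aent w.2 i1 j - Pmat B gamma w.1 i1 j) *
       (Aent w.2 i2 j - Pmat B gamma w.1 i2 j) |.

Definition maxM_lt {R : realType} (n K : nat) (B : 'I_K -> 'I_K -> R) (gamma : R)
  (eps : R) : pred (sbm_outcome n K) :=
  fun w => [forall i1 : 'I_n, forall i2 : 'I_n,
              (i1 != i2) ==> (Mstat B gamma w i1 i2 < eps)].

(* Fix i1 <> i2.  Conditionally on the labels, the summands
   X_j = (A_{i1 j} - P_{i1 j}) (A_{i2 j} - P_{i2 j}), j <> i1, i2, involve disjoint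
   entries of A and are therefore independent; each is a product of two independent
   centred Bernoulli deviations, so it is centred, bounded by 1 and has second moment
   at most 1/16.  Since exp y <= 1 + y + 2 y^2 for y <= 1/2, this gives
   E exp (lam X_j) <= 1 + lam^2/8 for |lam| <= 1/2, and a two-sided Chernoff bound
   with lam = min (2 eps) (1/2) yields
   P (M(i1,i2) >= eps) <= 2 exp (-(n-2) eps^2 / (2 (1 + eps/3)))
   (for eps > 1 the event is empty, as M <= 1).  A union bound over the n(n-1)/2
   unordered pairs gives the first claim; the second only compares exponents. *)

From HB Require Import structures.
From mathcomp Require Import all_boot all_order all_algebra.
From mathcomp Require Import all_classical all_reals all_analysis.
From mathcomp Require Import ring lra.
Set Implicit Arguments. Unset Strict Implicit. Unset Printing Implicit Defensive.
Import Order.TTheory GRing.Theory Num.Theory.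
Local Open Scope ring_scope.

Section ProductWeights.
Variables (R : comRingType) (I T : finType).

Lemma sum_ffun_prod_eq1 (q : I -> T -> R) :
  (forall i, \sum_t q i t = 1) -> \sum_(c : {ffun I -> T}) \prod_i q i (c i) = 1.
Proof. by move=> q1; rewrite -bigA_distr_bigA big1. Qed.

Lemma sum_ffun_prod_marginal2 (q : I -> T -> R) (i1 i2 : I) (F : T -> T -> R) :
  i1 != i2 -> (forall i, \sum_t q i t = 1) ->
  \sum_(c : {ffun I -> T}) (\prod_i q i (c i)) * F (c i1) (c i2)
  = \sum_x \sum_y q i1 x * q i2 y * F x y.
Proof.
move=> i12 q1; have i21 : (i2 == i1) = false by rewrite eq_sym (negbTE i12).
rewrite pair_bigA (partition_big (fun c : {ffun I -> T} => (c i1, c i2)) predT) //=.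
apply: eq_bigr => -[x y] _ /=.
rewrite (eq_bigr (fun c : {ffun I -> T} => (\prod_i q i (c i)) * F x y)); last first.
  by move=> c /eqP[-> ->].
rewrite -big_distrl /=; congr (_ * _).
pose Q i : pred T := [pred t | ((i == i1) ==> (t == x)) && ((i == i2) ==> (t == y))].
have famQ c : (c \in family Q) = ((c i1, c i2) == (x, y)).
  apply/familyP/eqP => [Qc | [c1 c2] i]; last first.
    by rewrite inE; apply/andP; split; apply/implyP => /eqP->; rewrite ?c1 ?c2.
  move: (Qc i1) (Qc i2); rewrite !inE !eqxx (negbTE i12) i21 /= andbT.
  by move=> /eqP-> /eqP->.
rewrite -(eq_bigl _ _ famQ) -bigA_distr_big_dep (bigD1 i1) // (bigD1 i2) 1?eq_sym //=.
rewrite /Q /= !eqxx (negbTE i12) i21 /=; under eq_bigl do rewrite andbT.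
rewrite !big_pred1_eq big1 ?mulr1 // => i /andP[ii1 ii2].
by rewrite -[RHS](q1 i); apply: eq_bigl => t; rewrite (negbTE ii1) (negbTE ii2).
Qed.

Lemma sum_ffun_prod_columns (J : finType) (q : I -> J -> T -> R)
    (G : J -> {ffun I -> T} -> R) :
  \sum_(A : {ffun I * J -> T})
     (\prod_(ij : I * J) q ij.1 ij.2 (A ij)) * \prod_j G j [ffun i => A (i, j)]
  = \prod_j \sum_(c : {ffun I -> T}) (\prod_i q i j (c i)) * G j c.
Proof.
pose cols (A : {ffun I * J -> T}) : {ffun J -> {ffun I -> T}} :=
  [ffun j => [ffun i => A (i, j)]].
pose uncols (C : {ffun J -> {ffun I -> T}}) : {ffun I * J -> T} :=
  [ffun ij => C ij.2 ij.1].
have colsK : cancel cols uncols by move=> A; apply/ffunP => -[i j]; rewrite !ffunE.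
have uncolsK : cancel uncols cols.
  by move=> C; apply/ffunP => j; apply/ffunP => i; rewrite !ffunE.
rewrite bigA_distr_bigA /= (reindex uncols); last by exists cols => ? _.
apply: eq_bigr => C _; rewrite big_split /=; congr (_ * _).
  by rewrite exchange_big pair_bigA; apply: eq_bigr => -[i j] _; rewrite ffunE.
by apply: eq_bigr => j _; congr (G j _); apply/ffunP => i; rewrite !ffunE.
Qed.

End ProductWeights.

Lemma expR_le_quadratic (R : realType) (y : R) :
  y <= 2^-1 -> expR y <= 1 + y + 2 * y ^+ 2.
Proof.
move=> y_le; have quad_ge0 : 0 <= 1 + y + 2 * y ^+ 2 by nra.
have -> : expR y = (expR (- y))^-1 by rewrite expRN invrK.
rewrite -[X in X <= _]mul1r ler_pdivrMr ?expR_gt0 //.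
apply: (@le_trans _ _ ((1 + y + 2 * y ^+ 2) * (1 - y))).
  have : 0 <= y ^+ 2 * (1 - 2 * y) by apply: mulr_ge0; [exact: sqr_ge0 | lra].
  lra.
by rewrite ler_wpM2l //; exact: expR_ge1Dx.
Qed.

Definition bern (R : ringType) (p : R) (b : bool) : R := if b then p else 1 - p.

Section Bernoulli.
Variables (R : realFieldType) (p : R).
Hypothesis p01 : 0 <= p <= 1.

Lemma bern_ge0 b : 0 <= bern p b.
Proof. by case: b p01 => /andP[] /=; lra. Qed.

Lemma sum_bern : \sum_b bern p b = 1.
Proof. by rewrite big_bool /= addrC subrK. Qed.

Lemma bern_dev_le1 (b : bool) : `|b%:R - p| <= 1.
Proof. by rewrite ler_norml; case: b p01 => /andP[] /=; lra. Qed.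

End Bernoulli.

Lemma bern_pair_mgf_le (R : realType) (p1 p2 lam : R) :
  0 <= p1 <= 1 -> 0 <= p2 <= 1 -> `|lam| <= 2^-1 ->
  \sum_b1 \sum_b2 bern p1 b1 * bern p2 b2 *
     expR (lam * (((b1 : bool)%:R - p1) * ((b2 : bool)%:R - p2)))
  <= 1 + lam ^+ 2 / 8.
Proof.
move=> p1_01 p2_01 lam_le.
pose X (b1 b2 : bool) : R := lam * ((b1%:R - p1) * (b2%:R - p2)).
apply: (@le_trans _ _ (\sum_b1 \sum_b2 bern p1 b1 * bern p2 b2 *
                         (1 + X b1 b2 + 2 * X b1 b2 ^+ 2))).
  apply: ler_sum => b1 _; apply: ler_sum => b2 _.
  rewrite ler_wpM2l ?mulr_ge0 ?bern_ge0 //; apply: expR_le_quadratic.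
  rewrite /X (le_trans (ler_norm _)) // normrM (le_trans _ lam_le) //.
  by rewrite ler_piMr // normrM mulr_ile1 ?bern_dev_le1.
(* the linear term vanishes as both deviations are centred *)
have -> : \sum_b1 \sum_b2 bern p1 b1 * bern p2 b2 * (1 + X b1 b2 + 2 * X b1 b2 ^+ 2)
    = 1 + 2 * lam ^+ 2 * (p1 * (1 - p1)) * (p2 * (1 - p2)).
  by rewrite /X /bern !big_bool /=; ring.
have var_le (p : R) : 0 <= p <= 1 -> 0 <= p * (1 - p) <= 4^-1.
  by case/andP=> ? ?; apply/andP; split; [nra | have := sqr_ge0 (p - 2^-1); nra].
move: (var_le _ p1_01) (var_le _ p2_01) => /andP[v1_ge0 v1_le] /andP[v2_ge0 v2_le].
have : 0 <= lam ^+ 2 * (4^-1 * 4^-1 - p1 * (1 - p1) * (p2 * (1 - p2))).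
  by rewrite mulr_ge0 ?sqr_ge0 // subr_ge0 ler_pM.
lra.
Qed.

Lemma indicator_le_expR2 (R : realType) (s t lam : R) : 0 <= lam ->
  (((t <= `|s|)%R : bool)%:R : R)
  <= expR (lam * s - lam * t) + expR (- lam * s - lam * t).
Proof.
move=> lam_ge0; have e1 := expR_ge0 (lam * s - lam * t).
have e2 := expR_ge0 (- lam * s - lam * t).
have [t_le | _] := lerP t `|s|; last by rewrite mulr0n; lra.
rewrite mulr1n.
have ge1 x : 0 <= x -> 1 <= expR (lam * x).
  by move=> x_ge0; apply: le_trans (expR_ge1Dx _); rewrite lerDl mulr_ge0.
have [s_ge0 | s_lt0] := lerP 0 s.
  have := ge1 (s - t); rewrite mulrBr; rewrite ger0_norm // in t_le; lra.
have := ge1 (- s - t); rewrite mulrBr mulrN -mulNr; rewrite ltr0_norm // in t_le; lra.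
Qed.

Lemma bernstein_rate (R : realFieldType) (eps : R) : 0 < eps <= 1 ->
  exists2 lam : R, 0 <= lam <= 2^-1 &
    lam ^+ 2 / 8 - lam * eps <= - (2^-1 * eps ^+ 2 / (1 + 3^-1 * eps)).
Proof.
case/andP=> eps_gt0 eps_le1; have den_gt0 : 0 < 1 + 3^-1 * eps by lra.
have [eps_small | eps_large] := lerP eps 4^-1.
  exists (2 * eps); first lra.
  rewrite lerNr ler_pdivrMr //.
  have : 0 <= eps ^+ 2 * eps by rewrite mulr_ge0 ?sqr_ge0 //; lra.
  nra.
exists 2^-1; first lra.
rewrite lerNr ler_pdivrMr //.
have : 0 <= (eps - 4^-1) * (1 - eps) by apply: mulr_ge0; lra.
nra.
Qed.

Lemma card_predC2 (T : finType) (a b : T) : a != b ->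
  #|[pred x : T | (x != a) && (x != b)]| = (#|T| - 2)%N.
Proof.
move=> ab; have := cardsC [set a; b]; rewrite cards2 ab => <-.
by rewrite addKn; apply: eq_card => x; rewrite !inE negb_or.
Qed.

Lemma bernstein_exponent_le (R : realFieldType) (x eps : R) : 4 <= x -> 0 < eps ->
  4^-1 * x * eps ^+ 2 / (1 + eps) <= 2^-1 * (x - 2) * eps ^+ 2 / (1 + 3^-1 * eps).
Proof.
move=> x_ge4 eps_gt0.
rewrite ler_pdivrMr; last lra.
rewrite [leRHS]mulrAC ler_pdivlMr; last lra.
have e2 : 0 <= eps ^+ 2 by exact: sqr_ge0.
have t1 : 0 <= eps ^+ 2 * (x - 4) by apply: mulr_ge0; lra.
have t2 : 0 <= eps ^+ 2 * eps * (x - 4) by rewrite !mulr_ge0 //; lra.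
have t3 : 0 <= eps ^+ 2 * eps by rewrite mulr_ge0 //; lra.
nra.
Qed.

Definition edge_pmf (R : ringType) (I : finType) (p : I -> I -> R) (i j : I)
    (b : bool) : R :=
  if i == j then (~~ b)%:R else bern (p i j) b.

Section EdgeModel.
Variables (R : realType) (I : finType) (p : I -> I -> R).
Hypothesis p01 : forall i j, 0 <= p i j <= 1.

Lemma edge_pmf_ge0 i j b : 0 <= edge_pmf p i j b.
Proof. by rewrite /edge_pmf; case: eqP => _; [case: b | exact: bern_ge0]. Qed.

Lemma sum_edge_pmf i j : \sum_b edge_pmf p i j b = 1.
Proof.
by rewrite /edge_pmf; case: eqP => _; [rewrite big_bool /= add0r | exact: sum_bern].
Qed.

Lemma edge_column_mgf_le (i1 i2 j : I) (lam : R) :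
  i1 != i2 -> j != i1 -> j != i2 -> `|lam| <= 2^-1 ->
  \sum_(c : {ffun I -> bool}) (\prod_i edge_pmf p i j (c i)) *
     expR (lam * (((c i1)%:R - p i1 j) * ((c i2)%:R - p i2 j)))
  <= 1 + lam ^+ 2 / 8.
Proof.
move=> i12 ji1 ji2 lam_le.
rewrite (sum_ffun_prod_marginal2 (q := fun i => edge_pmf p i j)
  (fun b1 b2 : bool => expR (lam * ((b1%:R - p i1 j) * (b2%:R - p i2 j))))) //.
  by rewrite /edge_pmf ![_ == j]eq_sym (negbTE ji1) (negbTE ji2) bern_pair_mgf_le.
by move=> i; exact: sum_edge_pmf.
Qed.

Lemma edge_mgf_cross_sum_le (i1 i2 : I) (lam : R) : i1 != i2 -> `|lam| <= 2^-1 ->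
  \sum_(A : {ffun I * I -> bool}) (\prod_(ij : I * I) edge_pmf p ij.1 ij.2 (A ij)) *
    expR (lam * \sum_(j | (j != i1) && (j != i2))
                  ((A (i1, j))%:R - p i1 j) * ((A (i2, j))%:R - p i2 j))
  <= (1 + lam ^+ 2 / 8) ^+ (#|I| - 2).
Proof.
move=> i12 lam_le.
pose G j (c : {ffun I -> bool}) := if (j != i1) && (j != i2)
  then expR (lam * (((c i1)%:R - p i1 j) * ((c i2)%:R - p i2 j))) else 1.
under eq_bigr => A _.
  rewrite mulr_sumr expR_sum [X in _ * X]big_mkcond /=.
  rewrite (eq_bigr (fun j => G j [ffun i => A (i, j)])) => [|j _]; last first.
    by rewrite /G !ffunE.
  over.
rewrite sum_ffun_prod_columns -(card_predC2 i12) -prodr_const [leRHS]big_mkcond /=.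
apply: ler_prod => j _; apply/andP; split.
  apply: sumr_ge0 => c _; apply: mulr_ge0.
    by apply: prodr_ge0 => i _; exact: edge_pmf_ge0.
  by rewrite /G; case: ifP => _ //; exact: expR_ge0.
rewrite /G inE; case: ifP => [/andP[ji1 ji2] | _]; first exact: edge_column_mgf_le.
under eq_bigr do rewrite mulr1.
by rewrite (sum_ffun_prod_eq1 (q := fun i => edge_pmf p i j)) // => i; exact: sum_edge_pmf.
Qed.

End EdgeModel.

Lemma sum_offdiag_const (R : nmodType) (T : finType) (c : R) :
  \sum_(x : T) \sum_(y : T | y != x) c = c *+ (#|T| * #|T|.-1).
Proof.
under eq_bigr => x _ do rewrite (eq_bigl (mem (predC1 x))) // sumr_const cardC1.
by rewrite sumr_const -mulrnA mulnC.
Qed.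

Section SBM.
Variables (R : realType) (n K : nat) (rho : 'I_K -> R) (B : 'I_K -> 'I_K -> R)
  (gamma : R).
Hypotheses (rho_ge0 : forall k, 0 <= rho k) (rho_sum1 : \sum_k rho k = 1)
  (B_ge0 : forall k l, 0 <= B k l) (B_le1 : forall k l, B k l <= 1)
  (gamma_gt0 : 0 < gamma) (gamma_le1 : gamma <= 1).

Local Notation pmf := (@sbm_pmf R n K rho B gamma).
Local Notation M := (@Mstat R n K B gamma).

Definition cross_sum (w : sbm_outcome n K) (i1 i2 : 'I_n) : R :=
  \sum_(j : 'I_n | (j != i1) && (j != i2))
     (Aent w.2 i1 j - Pmat B gamma w.1 i1 j) *
     (Aent w.2 i2 j - Pmat B gamma w.1 i2 j).

Lemma MstatE (w : sbm_outcome n K) (i1 i2 : 'I_n) :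
  M w i1 i2 = (n - 2)%:R^-1 * `|cross_sum w i1 i2|.
Proof. by []. Qed.

Lemma Pmat_ge0_le1 (z : {ffun 'I_n -> 'I_K}) (i j : 'I_n) :
  0 <= Pmat B gamma z i j <= 1.
Proof. by rewrite /Pmat mulr_ge0 ?mulr_ile1 ?(ltW gamma_gt0). Qed.

Lemma sbm_pmfE (w : sbm_outcome n K) : pmf w =
  (\prod_i rho (w.1 i)) *
  \prod_(ij : 'I_n * 'I_n) edge_pmf (Pmat B gamma w.1) ij.1 ij.2 (w.2 ij).
Proof. by []. Qed.

Lemma sbm_pmf_ge0 (w : sbm_outcome n K) : 0 <= pmf w.
Proof.
rewrite sbm_pmfE mulr_ge0 ?prodr_ge0 // => ij _.
exact/edge_pmf_ge0/Pmat_ge0_le1.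
Qed.

Lemma sbm_expectationE (F : sbm_outcome n K -> R) :
  \sum_w pmf w * F w =
  \sum_(z : {ffun 'I_n -> 'I_K}) (\prod_i rho (z i)) *
    \sum_(A : {ffun 'I_n * 'I_n -> bool})
       (\prod_(ij : 'I_n * 'I_n) edge_pmf (Pmat B gamma z) ij.1 ij.2 (A ij)) * F (z, A).
Proof.
under [RHS]eq_bigr do rewrite mulr_sumr.
by rewrite pair_bigA; apply: eq_bigr => -[z A] _; rewrite sbm_pmfE mulrA.
Qed.

Lemma sum_rho_prod : \sum_(z : {ffun 'I_n -> 'I_K}) \prod_i rho (z i) = 1.
Proof. exact: (sum_ffun_prod_eq1 (q := fun=> rho)). Qed.

Lemma sbm_pmf_sum1 : \sum_w pmf w = 1.
Proof.
under eq_bigr do rewrite -[pmf _]mulr1.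
rewrite sbm_expectationE -[RHS]sum_rho_prod; apply: eq_bigr => z _.
under [X in _ * X = _]eq_bigr do rewrite mulr1.
by rewrite (sum_ffun_prod_eq1 (q := fun ij => edge_pmf (Pmat B gamma z) ij.1 ij.2))
  ?mulr1 // => ij; apply: sum_edge_pmf; exact: Pmat_ge0_le1.
Qed.

Lemma sbm_mgf_cross_sum_le (i1 i2 : 'I_n) (lam : R) : i1 != i2 -> `|lam| <= 2^-1 ->
  \sum_w pmf w * expR (lam * cross_sum w i1 i2) <= (1 + lam ^+ 2 / 8) ^+ (n - 2).
Proof.
move=> i12 lam_le.
set c := (1 + _) ^+ _.
rewrite -[c]mul1r -[in leRHS]sum_rho_prod mulr_suml sbm_expectationE.
apply: ler_sum => z _; apply: ler_wpM2l; first exact: prodr_ge0.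
rewrite /c -[n in (n - 2)%N]card_ord; apply: edge_mgf_cross_sum_le => //.
exact: Pmat_ge0_le1.
Qed.

Lemma sbm_cross_sum_tail_le (i1 i2 : 'I_n) (t lam : R) : i1 != i2 -> 0 <= lam <= 2^-1 ->
  \sum_w pmf w * (((t <= `|cross_sum w i1 i2|)%R : bool)%:R : R)
  <= 2 * expR ((n - 2)%:R * (lam ^+ 2 / 8) - lam * t).
Proof.
move=> i12 /andP[lam_ge0 lam_le].
have pow_le : (1 + lam ^+ 2 / 8) ^+ (n - 2) <= expR ((n - 2)%:R * (lam ^+ 2 / 8)).
  rewrite expRM_natl lerXn2r ?nnegrE ?expR_ge0 ?expR_ge1Dx //.
  by rewrite addr_ge0 ?divr_ge0 ?sqr_ge0.
have lam_norm : `|lam| <= 2^-1 by rewrite ger0_norm.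
have mgf_pos := le_trans (sbm_mgf_cross_sum_le i12 lam_norm) pow_le.
have := sbm_mgf_cross_sum_le (lam := - lam) i12.
rewrite normrN sqrrN => /(_ lam_norm) /le_trans /(_ pow_le) mgf_neg.
apply: (@le_trans _ _ (\sum_w pmf w * (expR (lam * cross_sum w i1 i2)
                       + expR (- lam * cross_sum w i1 i2)) * expR (- (lam * t)))).
  apply: ler_sum => w _; rewrite -mulrA ler_wpM2l ?sbm_pmf_ge0 // mulrDl -!expRD.
  exact: indicator_le_expR2.
rewrite -mulr_suml; under eq_bigr do rewrite mulrDr; rewrite big_split /=.
rewrite expRD mulrA ler_wpM2r ?expR_ge0 // mulr_natl mulr2n.
by rewrite lerD.
Qed.

Lemma Mstat_sym (w : sbm_outcome n K) (i1 i2 : 'I_n) : M w i1 i2 = M w i2 i1.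
Proof.
rewrite !MstatE /cross_sum; congr (_ * `|_|).
by apply: eq_big => [j | j _]; rewrite 1?andbC // mulrC.
Qed.

Lemma cross_sum_norm_le (w : sbm_outcome n K) (i1 i2 : 'I_n) : i1 != i2 ->
  `|cross_sum w i1 i2| <= (n - 2)%:R.
Proof.
move=> i12; apply: le_trans (ler_norm_sum _ _ _) _.
rewrite -[n in (n - 2)%N]card_ord -(card_predC2 i12) -sumr_const.
rewrite [leRHS](eq_bigl (fun j => (j != i1) && (j != i2))) //; apply: ler_sum => j _.
by rewrite normrM mulr_ile1 ?normr_ge0 ?bern_dev_le1 ?Pmat_ge0_le1.
Qed.

Lemma Mstat_le1 (w : sbm_outcome n K) (i1 i2 : 'I_n) : i1 != i2 -> M w i1 i2 <= 1.
Proof.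
move=> i12; rewrite MstatE.
have [->|m_gt0] := posnP (n - 2); first by rewrite invr0 mul0r.
by rewrite mulrC ler_pdivrMr ?ltr0n // mul1r cross_sum_norm_le.
Qed.

Lemma Mstat_ge_cross_sum (w : sbm_outcome n K) (i1 i2 : 'I_n) (eps : R) : 0 < eps ->
  eps <= M w i1 i2 -> (n - 2)%:R * eps <= `|cross_sum w i1 i2|.
Proof.
rewrite MstatE.
have [->|m_gt0] := posnP (n - 2); first by rewrite invr0 mul0r => /lt_geF->.
by move=> _; rewrite mulrC ler_pdivlMr ?ltr0n // mulrC.
Qed.

Lemma sbm_Mstat_tail_le (i1 i2 : 'I_n) (eps : R) : i1 != i2 -> 0 < eps ->
  \sum_w pmf w * (((eps <= M w i1 i2)%R : bool)%:R : R)
  <= 2 * expR (- ((2^-1 * (n - 2)%:R * eps ^+ 2) / (1 + 3^-1 * eps))).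
Proof.
move=> i12 eps_gt0; have [eps_gt1 | eps_le1] := ltrP 1 eps.
  rewrite big1 ?mulr_ge0 ?expR_ge0 // => w _.
  by rewrite lt_geF ?mulr0 // (le_lt_trans (Mstat_le1 w i12)).
have /bernstein_rate[lam lam_range rate_le] : 0 < eps <= 1 by apply/andP.
have tail_le := sbm_cross_sum_tail_le ((n - 2)%:R * eps) i12 lam_range.
apply: le_trans (le_trans _ tail_le) _.
  apply: ler_sum => w _; apply: ler_wpM2l; first exact: sbm_pmf_ge0.
  by have [/(Mstat_ge_cross_sum eps_gt0)-> | _] := lerP eps (M w i1 i2).
apply: ler_wpM2l => //; rewrite ler_expR.
have -> : (n - 2)%:R * (lam ^+ 2 / 8) - lam * ((n - 2)%:R * eps)
    = (n - 2)%:R * (lam ^+ 2 / 8 - lam * eps) by ring.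
have -> : - (2^-1 * (n - 2)%:R * eps ^+ 2 / (1 + 3^-1 * eps))
    = (n - 2)%:R * - (2^-1 * eps ^+ 2 / (1 + 3^-1 * eps)) by ring.
exact: ler_wpM2l.
Qed.

Lemma not_maxM_lt_count (eps : R) (w : sbm_outcome n K) : ~~ maxM_lt B gamma eps w ->
  2 <= \sum_(i1 : 'I_n) \sum_(i2 : 'I_n | i2 != i1)
         (((eps <= M w i1 i2)%R : bool)%:R : R).
Proof.
rewrite /maxM_lt => /forallPn[a /forallPn[b]].
rewrite negb_imply -leNgt => /andP[ab eps_le].
rewrite pair_big_dep /= (bigD1 (a, b)) 1?eq_sym //= (bigD1 (b, a)) /=; last first.
  by rewrite ab /= xpair_eqE negb_and ab orbT.
have eps_le1 : (eps <= M w a b)%R = true := eps_le.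
rewrite eps_le1 Mstat_sym eps_le1 /= mulr1n addrA lerDl.
by apply: sumr_ge0 => ij _; exact: ler0n.
Qed.

Lemma sbm_prob_maxM_lt_ge (eps : R) : 0 < eps ->
  1 - (n * (n - 1))%:R * expR (- ((2^-1 * (n - 2)%:R * eps ^+ 2) / (1 + 3^-1 * eps)))
  <= @sbm_prob R n K rho B gamma (@maxM_lt R n K B gamma eps).
Proof.
move=> eps_gt0; set X := expR _.
pose ind w i1 i2 : R := ((eps <= M w i1 i2)%R : bool)%:R.
have := sbm_pmf_sum1; rewrite (bigID (maxM_lt B gamma eps)) /= => pmf_sum1.
suff : \sum_(w | ~~ maxM_lt B gamma eps w) pmf w <= (n * (n - 1))%:R * X.
  by rewrite /sbm_prob; lra.
apply: (@le_trans _ _ (\sum_w pmf w * (2^-1 * \sum_i1 \sum_(i2 | i2 != i1) ind w i1 i2))).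
  rewrite big_mkcond /=; apply: ler_sum => w _; case: ifP => [notE | _].
    rewrite -[leLHS]mulr1 ler_wpM2l ?sbm_pmf_ge0 //.
    by have := not_maxM_lt_count notE; lra.
  rewrite mulr_ge0 ?sbm_pmf_ge0 // mulr_ge0 // sumr_ge0 // => i1 _.
  by rewrite sumr_ge0 // => i2 _; exact: ler0n.
rewrite (_ : \sum_w _ = 2^-1 * \sum_i1 \sum_(i2 | i2 != i1) \sum_w pmf w * ind w i1 i2).
  apply: (@le_trans _ _ (2^-1 * \sum_(i1 : 'I_n) \sum_(i2 : 'I_n | i2 != i1) (2 * X))).
    apply: ler_wpM2l => //; apply: ler_sum => i1 _; apply: ler_sum => i2 i21.
    by apply: sbm_Mstat_tail_le; rewrite // eq_sym.
  rewrite sum_offdiag_const card_ord -[_ *+ (n * n.-1)]mulr_natl.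
  by rewrite mulrCA mulKf ?pnatr_eq0 // subn1.
under eq_bigr do rewrite mulrCA mulr_sumr.
rewrite -mulr_sumr exchange_big /=; congr (_ * _); apply: eq_bigr => i1 _.
by under eq_bigr do rewrite mulr_sumr; exact: exchange_big.
Qed.

End SBM.

Theorem lemma6 (R : realType) (n K : nat) (rho : 'I_K -> R)
  (B : 'I_K -> 'I_K -> R) (gamma eps : R)
  (rho_ge0 : forall k, 0 <= rho k) (rho_sum1 : \sum_(k : 'I_K) rho k = 1)
  (B_ge0 : forall k l, 0 <= B k l) (B_le1 : forall k l, B k l <= 1)
  (gamma_gt0 : 0 < gamma) (gamma_le1 : gamma <= 1)
  (eps_gt0 : 0 < eps) :
  1 - (n * (n - 1))%:R *
      expR (- ((2^-1 * (n - 2)%:R * eps ^+ 2) / (1 + 3^-1 * eps)))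
    <= @sbm_prob R n K rho B gamma (@maxM_lt R n K B gamma eps)
  /\
  ((4 <= n)%N ->
   1 - (n * (n - 1))%:R * expR (- ((4^-1 * n%:R * eps ^+ 2) / (1 + eps)))
   <= 1 - (n * (n - 1))%:R *
      expR (- ((2^-1 * (n - 2)%:R * eps ^+ 2) / (1 + 3^-1 * eps)))).
Proof.
split; first exact: sbm_prob_maxM_lt_ge.
move=> n_ge4; rewrite lerD2l lerN2; apply: ler_wpM2l; first exact: ler0n.
rewrite ler_expR lerN2 natrB ?(leq_trans _ n_ge4) //.
by apply: bernstein_exponent_le => //; rewrite (ler_nat R 4 n).
Qed.
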